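(* The measure $E_2$ is not monogamous. Explicitly: let $\mathcal H^A=\mathbb C^3$, $\mathcal H^B=\mathbb C^4$, $\mathcal H^C=\mathbb C^2$, and let real numbers $a_0,a_1,a_2,a_0',a_1',a_2'\ge 0$ satisfy $a_0^2=a_0'^2\ge \tfrac12$, $a_0>a_1\ge a_2$, $a_0'>a_1'\ge a_2'$, $\sum_i a_i^2=\sum_i a_i'^2=1$, and $a_1'a_2\neq a_1a_2'$. Put $$|\psi_0\rangle^{AB}=a_0|0\rangle|0\rangle+a_1|1\rangle|1\rangle+a_2|2\rangle|2\rangle,\qquad |\psi_1\rangle^{AB}=a_0'|0\rangle|3\rangle+a_1'|1\rangle|2\rangle+a_2'|2\rangle|1\rangle,$$ $$|\Phi\rangle^{ABC}=\tfrac{1}{\sqrt2}\big(|\psi_0\rangle^{AB}|0\rangle^C+|\psi_1\rangle^{AB}|1\rangle^C\big),$$ and let $\rho^{AB}=\mathrm{tr}_C|\Phi\rangle\langle\Phi|$, $\rho^{AC}=\mathrm{tr}_B|\Phi\rangle\langle\Phi|$. Then $E_2(|\Phi\rangle^{A|BC})=E_2(\rho^{AB})=1-a_0^2$, while $E_2(\rho^{AC})>0$ (indeed $\rho^{AC}$ has a non-positive partial transpose).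
   Context: For a bipartite pure state $|\psi\rangle\in\mathcal H^{X}\otimes\mathcal H^{Y}$ with Schmidt decomposition $|\psi\rangle=\sum_{j=1}^r\lambda_j|e_j\rangle|f_j\rangle$, $\lambda_1\ge\lambda_2\ge\dots\ge\lambda_r>0$, the partial-norm of entanglement is $E_2(|\psi\rangle)=\sum_{i\ge2}\lambda_i^2=1-\lambda_1^2=1-\|\rho^X\|$, where $\rho^X=\mathrm{tr}_Y|\psi\rangle\langle\psi|$ and $\|\cdot\|$ is the operator norm. For a mixed bipartite state $\rho$, $E_2(\rho)=\min\sum_j p_jE_2(|\psi_j\rangle)$, the minimum over all pure-state decompositions $\rho=\sum_jp_j|\psi_j\rangle\langle\psi_j|$ (convex-roof extension). For a tripartite state, $E(A|BC)$ denotes the measure of the state with respect to the bipartition $A$ versus $BC$, and $E(AB)$, $E(AC)$ denote the measure of the reduced states $\rho^{AB}=\mathrm{tr}_C\rho^{ABC}$, $\rho^{AC}=\mathrm{tr}_B\rho^{ABC}$. A bipartite entanglement measure $E$ is called monogamous if for every tripartite state $\rho^{ABC}$ satisfying the disentangling condition $E(A|BC)=E(AB)$ one has $E(AC)=0$. *)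

From HB Require Import structures.
From mathcomp Require Import all_boot all_order all_algebra.
From mathcomp Require Import boolp classical_sets reals.
From mathcomp Require Import complex.
Set Implicit Arguments. Unset Strict Implicit. Unset Printing Implicit Defensive.
Import Order.TTheory GRing.Theory Num.Theory.
Local Open Scope ring_scope.
Local Open Scope complex_scope.
Local Open Scope classical_set_scope.

Section QuantumDefs.
Variable R : realType.
Local Notation C := R[i].

Definition cabs2 (z : C) : R := complex.Re z ^+ 2 + complex.Im z ^+ 2.

Definition vnorm (T : finType) (v : T -> C) : R :=
  Num.sqrt (\sum_(x : T) cabs2 (v x)).

Definition apply_op (T : finType) (M : T -> T -> C) (v : T -> C) : T -> C :=
  fun x => \sum_(y : T) M x y * v y.

Definition opnorm (T : finType) (M : T -> T -> C) : R :=
  sup [set r : R | exists v : T -> C, vnorm v = 1 /\ r = vnorm (apply_op M v)].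

(* positive semidefinite: <v, M v> is real and >= 0 for all v *)
Definition psd (T : finType) (M : T -> T -> C) : Prop :=
  forall v : T -> C, 0 <= \sum_(x : T) \sum_(y : T) (v x)^* * M x y * v y.

Definition density (T : finType) (M : T -> T -> C) : Prop :=
  psd M /\ \sum_(x : T) M x x = 1.

Definition proj (T : finType) (psi : T -> C) : T -> T -> C :=
  fun x y => psi x * (psi y)^*.

Definition redX (I J : finType) (psi : I * J -> C) : I -> I -> C :=
  fun i i' => \sum_(j : J) psi (i, j) * (psi (i', j))^*.

Definition E2pure (I J : finType) (psi : I * J -> C) : R :=
  1 - opnorm (redX psi).

Definition pure_decomp (T : finType) (rho : T -> T -> C)
    (s : seq (R * (T -> C))) : Prop :=
  (forall k, k \in s -> 0 <= k.1) /\
  \sum_(k <- s) k.1 = 1 /\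
  (forall k, k \in s -> vnorm k.2 = 1) /\
  (forall x y, rho x y = \sum_(k <- s) (k.1)%:C * proj k.2 x y).

Definition E2 (I J : finType) (rho : I * J -> I * J -> C) : R :=
  inf [set e : R | exists s, pure_decomp rho s /\
                     e = \sum_(k <- s) k.1 * E2pure k.2].

Definition trC (I J K : finType) (rho : I * (J * K) -> I * (J * K) -> C)
  : I * J -> I * J -> C :=
  fun x y => \sum_(k : K) rho (x.1, (x.2, k)) (y.1, (y.2, k)).

Definition trB (I J K : finType) (rho : I * (J * K) -> I * (J * K) -> C)
  : I * K -> I * K -> C :=
  fun x y => \sum_(j : J) rho (x.1, (j, x.2)) (y.1, (j, y.2)).

Definition ptrans2 (I K : finType) (rho : I * K -> I * K -> C)
  : I * K -> I * K -> C :=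
  fun x y => rho (x.1, y.2) (y.1, x.2).

End QuantumDefs.

Definition bimeasure (R : realType) :=
  forall I J : finType, (I * J -> I * J -> R[i]) -> R.

Definition E2m (R : realType) : bimeasure R := fun I J rho => @E2 R I J rho.

Definition monogamous (R : realType) (E : bimeasure R) : Prop :=
  forall (I J K : finType) (rho : I * (J * K) -> I * (J * K) -> R[i]),
    density rho ->
    E I (J * K)%type rho = E I J (trC rho) -> E I K (trB rho) = 0.

Definition coef3 (R : realType) (x0 x1 x2 : R) (i : 'I_3) : R :=
  match val i with 0 => x0 | 1 => x1 | _ => x2 end.

Definition psi0 (R : realType) (a0 a1 a2 : R) (i : 'I_3) (j : 'I_4) : R[i] :=
  if val i == val j then (coef3 a0 a1 a2 i)%:C else 0.

(* |psi_1> = a0'|03> + a1'|12> + a2'|21> *)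
Definition psi1 (R : realType) (b0 b1 b2 : R) (i : 'I_3) (j : 'I_4) : R[i] :=
  if val j == (3 - val i)%N then (coef3 b0 b1 b2 i)%:C else 0.

Definition Phi (R : realType) (a0 a1 a2 b0 b1 b2 : R)
  (x : 'I_3 * ('I_4 * 'I_2)) : R[i] :=
  (Num.sqrt (2 : R))^-1%:C *
  (if val x.2.2 == 0%N then psi0 a0 a1 a2 x.1 x.2.1
   else psi1 b0 b1 b2 x.1 x.2.1).

(* The reduced state of Phi on A is diagonal with entries (a_i^2 + a_i'^2) / 2, so
   E_2(Phi) = 1 - a0^2.  Every pure state of a decomposition of rho^AB lies in the range
   of rho^AB, i.e. is al psi_0 + be psi_1; because a0 = a0', its reduced state is
   a0^2 (+) B with ||B||_F <= a0^2, so all of them, hence rho^AB, have E_2 = 1 - a0^2.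
   For rho^AC, the functional F(rho) = <v, rho^Gamma v> with v = c|i,0> + d|i',1> is
   negative when a1' a2 <> a1 a2' (so rho^AC is not PPT), while on a pure 3 x 2 state it
   is at least -2|cd| |m| for a 2 x 2 minor m with |m|^2 <= E_2.  Averaging over a
   decomposition and Jensen give E_2(rho^AC) >= F^2 / (4 |cd|^2) > 0. *)

From Pilot Require Import Defs.
From HB Require Import structures.
From mathcomp Require Import all_boot all_order all_algebra.
From mathcomp Require Import boolp classical_sets reals.
From mathcomp Require Import complex.
From mathcomp Require Import ring lra.
Import Order.TTheory GRing.Theory Num.Theory ComplexField.Normc.
Local Open Scope complex_scope.
Local Open Scope ring_scope.
Local Open Scope classical_set_scope.

Set Implicit Arguments. Unset Strict Implicit. Unset Printing Implicit Defensive.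

Ltac complex_eq := apply/eqP; rewrite eq_complex /=; apply/andP; split; apply/eqP.

Section ComplexModulus.
Variable R : realType.
Implicit Types (z w : R[i]) (a : R).

Lemma conj_realC a : (a%:C)^* = a%:C :> R[i].
Proof. by complex_eq; rewrite ?oppr0. Qed.

Lemma cabs2_ge0 z : 0 <= cabs2 z.
Proof. by rewrite /cabs2 addr_ge0 // sqr_ge0. Qed.

Lemma cabs2_mulJ z : (cabs2 z)%:C = z * z^*.
Proof. by case: z => a b; rewrite /cabs2 /=; simpc; complex_eq; ring. Qed.

Lemma cabs2M z w : cabs2 (z * w) = cabs2 z * cabs2 w.
Proof. by case: z => a b; case: w => c d; rewrite /cabs2 /=; ring. Qed.

Lemma cabs2N z : cabs2 (- z) = cabs2 z.
Proof. by case: z => a b; rewrite /cabs2 /= !sqrrN. Qed.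

Lemma cabs2_real a : cabs2 a%:C = a ^+ 2.
Proof. by rewrite /cabs2 /= expr0n /= addr0. Qed.

Lemma cabs2_eq0 z : cabs2 z = 0 -> z = 0.
Proof.
case: z => a b; rewrite /cabs2 /= => /eqP.
by rewrite paddr_eq0 ?sqr_ge0 // !sqrf_eq0 => /andP [/eqP -> /eqP ->].
Qed.

Lemma normc_sqr z : normc z ^+ 2 = cabs2 z.
Proof. by case: z => a b; rewrite /= sqr_sqrtr // addr_ge0 ?sqr_ge0. Qed.

Lemma normc_conj z : normc z^* = normc z.
Proof. by case: z => a b; rewrite /= sqrrN. Qed.

Lemma Re_ge_Nnormc z : - normc z <= complex.Re z.
Proof.
case: z => a b /=; rewrite lerNl.
apply: le_trans (ler_norm (- a)) _; rewrite normrN -sqrtr_sqr.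
by rewrite ler_sqrt ?addr_ge0 ?sqr_ge0 // lerDl sqr_ge0.
Qed.

(* Lagrange's identity: the defect in Cauchy-Schwarz is a sum of squared minors. *)
Lemma cabs2_dot2_le (x1 x2 y1 y2 : R[i]) :
  cabs2 (x1 * y1 + x2 * y2) <= (cabs2 x1 + cabs2 x2) * (cabs2 y1 + cabs2 y2).
Proof.
have -> : (cabs2 x1 + cabs2 x2) * (cabs2 y1 + cabs2 y2) =
  cabs2 (x1 * y1 + x2 * y2) + cabs2 (x1 * y2^* - x2 * y1^*).
  case: x1 => p1 q1; case: x2 => p2 q2; case: y1 => r1 s1; case: y2 => r2 s2.
  by rewrite /cabs2 /=; ring.
by rewrite lerDl cabs2_ge0.
Qed.

Lemma cabs2_dot3_le (x1 x2 x3 y1 y2 y3 : R[i]) :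
  cabs2 (x1 * y1 + (x2 * y2 + x3 * y3)) <=
  (cabs2 x1 + (cabs2 x2 + cabs2 x3)) * (cabs2 y1 + (cabs2 y2 + cabs2 y3)).
Proof.
have -> : (cabs2 x1 + (cabs2 x2 + cabs2 x3)) * (cabs2 y1 + (cabs2 y2 + cabs2 y3)) =
  cabs2 (x1 * y1 + (x2 * y2 + x3 * y3)) + (cabs2 (x1 * y2^* - x2 * y1^*) +
  cabs2 (x1 * y3^* - x3 * y1^*) + cabs2 (x2 * y3^* - x3 * y2^*)).
  case: x1 => p1 q1; case: x2 => p2 q2; case: x3 => p3 q3.
  case: y1 => r1 s1; case: y2 => r2 s2; case: y3 => r3 s3.
  by rewrite /cabs2 /=; ring.
by rewrite lerDl; apply: addr_ge0; [apply: addr_ge0|]; apply: cabs2_ge0.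
Qed.

(* For a 3 x 2 matrix Z: ||Z Z^*||_F^2 + 2 (sum of squared 2 x 2 minors) = ||Z||_F^4. *)
Lemma gram32_minors (z00 z01 z10 z11 z20 z21 : R[i]) :
  let g (u0 u1 w0 w1 : R[i]) := cabs2 (u0 * w0^* + u1 * w1^*) in
  g z00 z01 z00 z01 + g z00 z01 z10 z11 + g z00 z01 z20 z21 +
  (g z10 z11 z00 z01 + g z10 z11 z10 z11 + g z10 z11 z20 z21) +
  (g z20 z21 z00 z01 + g z20 z21 z10 z11 + g z20 z21 z20 z21) +
  2 * (cabs2 (z00 * z11 - z01 * z10) + cabs2 (z00 * z21 - z01 * z20) +
       cabs2 (z10 * z21 - z11 * z20)) =
  (cabs2 z00 + cabs2 z01 + cabs2 z10 + cabs2 z11 + cabs2 z20 + cabs2 z21) ^+ 2.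
Proof.
case: z00 => p1 q1; case: z01 => p2 q2; case: z10 => p3 q3.
case: z11 => p4 q4; case: z20 => p5 q5; case: z21 => p6 q6.
by rewrite /cabs2 /=; ring.
Qed.

End ComplexModulus.

Arguments cabs2 : simpl never.

Lemma sum_pair (V : nmodType) (I J : finType) (F : I * J -> V) :
  \sum_x F x = \sum_i \sum_j F (i, j).
Proof. by rewrite pair_bigA; apply: eq_bigr => -[]. Qed.

Lemma jensen_sqr (R : realDomainType) (X : eqType) (s : seq (R * X)) (f : R * X -> R) :
  (forall k, k \in s -> 0 <= k.1) -> \sum_(k <- s) k.1 = 1 ->
  (\sum_(k <- s) k.1 * f k) ^+ 2 <= \sum_(k <- s) k.1 * f k ^+ 2.
Proof.
move=> p_ge0 p_sum1; set m := \sum_(k <- s) k.1 * f k.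
have var_ge0 : 0 <= \sum_(k <- s) k.1 * (f k - m) ^+ 2.
  by rewrite big_seq; apply: sumr_ge0 => k ks; rewrite mulr_ge0 ?p_ge0 ?sqr_ge0.
have var_expand : \sum_(k <- s) k.1 * (f k - m) ^+ 2 =
   \sum_(k <- s) k.1 * f k ^+ 2 - 2 * m * m + m ^+ 2 * \sum_(k <- s) k.1.
  rewrite (eq_bigr (fun k => k.1 * f k ^+ 2 + (- (2 * m) * (k.1 * f k) + m ^+ 2 * k.1)));
    last by move=> k _; ring.
  by rewrite !big_split /= -!mulr_sumr -/m; ring.
by move: var_ge0; rewrite var_expand p_sum1; lra.
Qed.

Section OperatorNorm.
Variables (R : realType) (T : finType).
Implicit Types (v : T -> R[i]) (M : T -> T -> R[i]).

Lemma vnorm_eq1 v : vnorm v = 1 <-> \sum_x cabs2 (v x) = 1.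
Proof.
have sum_ge0 : 0 <= \sum_x cabs2 (v x) by apply: sumr_ge0 => x _; apply: cabs2_ge0.
rewrite /vnorm; split => [v1|->]; last by rewrite sqrtr1.
by rewrite -[LHS]sqr_sqrtr // v1 expr1n.
Qed.

Lemma vnorm_le v c : 0 <= c -> \sum_x cabs2 (v x) <= c ^+ 2 -> vnorm v <= c.
Proof. by move=> c_ge0 H; rewrite /vnorm -(ger0_norm c_ge0) -sqrtr_sqr ler_sqrt ?sqr_ge0. Qed.

Lemma vnorm_eq v c : 0 <= c -> \sum_x cabs2 (v x) = c ^+ 2 -> vnorm v = c.
Proof. by move=> c_ge0 H; rewrite /vnorm H sqrtr_sqr ger0_norm. Qed.

Definition basisv (t0 : T) : T -> R[i] := fun x => if x == t0 then 1 else 0.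

Lemma vnorm_basisv t0 : vnorm (basisv t0) = 1.
Proof.
apply/vnorm_eq1; rewrite (bigD1 t0) //= big1 => [|x /negbTE x_t0].
  by rewrite /basisv eqxx cabs2_real expr1n addr0.
by rewrite /basisv x_t0 cabs2_real expr0n.
Qed.

Lemma opnorm_le M c : (exists v, vnorm v = 1) ->
  (forall v, vnorm v = 1 -> vnorm (apply_op M v) <= c) -> opnorm M <= c.
Proof.
move=> [v0 v0_1] Mc; apply: ge_sup; first by exists (vnorm (apply_op M v0)); exists v0.
by move=> r [v [v1 ->]]; apply: Mc.
Qed.

Lemma opnorm_eq M c v : (forall v, vnorm v = 1 -> vnorm (apply_op M v) <= c) ->
  vnorm v = 1 -> vnorm (apply_op M v) = c -> opnorm M = c.
Proof.
move=> Mc v1 Mv; apply/eqP; rewrite eq_le opnorm_le //; last by exists v.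
rewrite -Mv; apply: ub_le_sup; last by exists v.
by exists c => r [w [w1 ->]]; apply: Mc.
Qed.

Lemma opnorm_diag M (d : T -> R) t0 :
  (forall x y, M x y = if x == y then (d x)%:C else 0) ->
  (forall x, 0 <= d x <= d t0) -> opnorm M = d t0.
Proof.
move=> ME d_le.
have applyE v x : apply_op M v x = (d x)%:C * v x.
  rewrite /apply_op (bigD1 x) //= ME eqxx big1 ?addr0 // => y.
  by rewrite ME eq_sym => /negbTE ->; rewrite mul0r.
have dt0_ge0 : 0 <= d t0 by case/andP: (d_le t0).
apply: (@opnorm_eq _ _ (basisv t0)); last 1 first.
- apply: vnorm_eq => //; rewrite (bigD1 t0) //= big1 => [|x /negbTE x_t0].
    by rewrite applyE /basisv eqxx mulr1 cabs2_real addr0.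
  by rewrite applyE /basisv x_t0 mulr0 cabs2_real expr0n.
- move=> v /vnorm_eq1 v1; apply: vnorm_le => //.
  rewrite -[X in _ <= X]mulr1 -v1 mulr_sumr; apply: ler_sum => x _.
  rewrite applyE cabs2M cabs2_real ler_wpM2r ?cabs2_ge0 //.
  by case/andP: (d_le x) => dx_ge0 dx_le; rewrite ler_sqr.
- exact: vnorm_basisv.
Qed.

End OperatorNorm.

Arguments basisv {R T}.

Lemma opnorm_block3 (R : realType) (M : 'I_3 -> 'I_3 -> R[i]) (blk : nat -> nat -> R[i]) (m : R) :
  (forall x y, M x y = blk (val x) (val y)) ->
  blk 0 0 = m%:C -> blk 0 1 = 0 -> blk 0 2 = 0 -> blk 1 0 = 0 -> blk 2 0 = 0 ->
  0 <= m ->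
  cabs2 (blk 1 1) + cabs2 (blk 1 2) + cabs2 (blk 2 1) + cabs2 (blk 2 2) <= m ^+ 2 ->
  opnorm M = m.
Proof.
move=> ME b00 b01 b02 b10 b20 m_ge0 frob_le.
apply: (@opnorm_eq _ _ _ _ (basisv ord0)); last 1 first.
- apply: vnorm_eq => //; rewrite /apply_op !big_ord_recl !big_ord0 !ME /basisv /=.
  by rewrite b00 b10 b20 !mulr0 !mul0r !addr0 mulr1 !cabs2_real expr0n /= !addr0.
- move=> v /vnorm_eq1; rewrite !big_ord_recl !big_ord0 /= => v1.
  apply: vnorm_le => //; rewrite /apply_op !big_ord_recl !big_ord0 !ME /=.
  rewrite b00 b01 b02 b10 b20 !mul0r !addr0 !add0r cabs2M cabs2_real.
  move: v1; set v0 := v ord0; set v1 := v _; set v2 := v _ => v_1.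
  have row1 := cabs2_dot2_le (blk 1 1) (blk 1 2) v1 v2.
  have row2 := cabs2_dot2_le (blk 2 1) (blk 2 2) v1 v2.
  have g0 := cabs2_ge0 v0; have g1 := cabs2_ge0 v1; have g2 := cabs2_ge0 v2.
  have := ler_wpM2r (addr_ge0 g1 g2) frob_le.
  nra.
- exact: vnorm_basisv.
Qed.

Section PureDecomposition.
Variables (R : realType) (T : finType).
Implicit Types (rho : T -> T -> R[i]) (s : seq (R * (T -> R[i]))).

Lemma pure_decompE rho s x y : pure_decomp rho s ->
  rho x y = \sum_(k <- s) (k.1)%:C * (k.2 x * (k.2 y)^*).
Proof. by case=> _ [_ [_ ->]]. Qed.

Lemma pure_decomp_diag rho s x : pure_decomp rho s ->
  rho x x = (\sum_(k <- s) k.1 * cabs2 (k.2 x))%:C.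
Proof.
move=> D; rewrite (pure_decompE x x D) rmorph_sum; apply: eq_bigr => k _.
by rewrite -cabs2_mulJ -rmorphM.
Qed.

Lemma pure_decomp_qform2 rho s x y (c d : R[i]) : pure_decomp rho s ->
  (\sum_(k <- s) k.1 * cabs2 (c * k.2 x + d * k.2 y))%:C =
  c * c^* * rho x x + c * d^* * rho x y + d * c^* * rho y x + d * d^* * rho y y.
Proof.
move=> D; rewrite !(pure_decompE _ _ D) !mulr_sumr -!big_split rmorph_sum /=.
apply: eq_bigr => k _.
transitivity ((k.1)%:C * (cabs2 (c * k.2 x + d * k.2 y))%:C); first by rewrite rmorphM.
rewrite cabs2_mulJ rmorphD !rmorphM /=; ring.
Qed.

Lemma pure_decomp_mixed rho s x1 x2 y1 y2 (c d : R) : pure_decomp rho s ->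
  (\sum_(k <- s) k.1 * (c ^+ 2 * cabs2 (k.2 x1) + d ^+ 2 * cabs2 (k.2 x2) +
      2 * (c * d) * complex.Re (k.2 y1 * (k.2 y2)^*)))%:C =
  (c ^+ 2)%:C * rho x1 x1 + (d ^+ 2)%:C * rho x2 x2 + (c * d)%:C * (rho y1 y2 + rho y2 y1).
Proof.
move=> D; rewrite !(pure_decompE _ _ D) mulrDr !mulr_sumr -!big_split rmorph_sum /=.
apply: eq_bigr => k _.
move: (k.2 x1) (k.2 x2) (k.2 y1) (k.2 y2) (k.1) => [p1 q1] [p2 q2] [p3 q3] [p4 q4] r.
by rewrite /cabs2 /=; complex_eq; ring.
Qed.

Lemma pure_decomp_avg_eq0 rho s (g : R * (T -> R[i]) -> R) :
  pure_decomp rho s -> (forall k, 0 <= g k) ->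
  \sum_(k <- s) k.1 * g k = 0 -> forall k, k \in s -> 0 < k.1 -> g k = 0.
Proof.
move=> [p_ge0 _] g_ge0 avg0 k ks k_gt0.
have : \sum_(k <- s | k \in s) k.1 * g k == 0 by rewrite -big_seq avg0.
rewrite psumr_eq0 => [/allP/(_ k ks)|i /p_ge0 i_ge0]; last by rewrite mulr_ge0.
by rewrite ks mulf_eq0 gt_eqF //= => /eqP.
Qed.

Lemma pure_decomp_diag_eq0 rho s k x :
  pure_decomp rho s -> k \in s -> 0 < k.1 -> rho x x = 0 -> k.2 x = 0.
Proof.
move=> D ks k_gt0 rho_x0; apply: cabs2_eq0.
apply: (pure_decomp_avg_eq0 (g := fun k => cabs2 (k.2 x)) D) => //.
  by move=> ?; apply: cabs2_ge0.
by apply: complexI; rewrite -(pure_decomp_diag x D) rho_x0.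
Qed.

Lemma pure_decomp_qform2_eq0 rho s k x y (c d : R[i]) :
  pure_decomp rho s -> k \in s -> 0 < k.1 ->
  c * c^* * rho x x + c * d^* * rho x y + d * c^* * rho y x + d * d^* * rho y y = 0 ->
  c * k.2 x + d * k.2 y = 0.
Proof.
move=> D ks k_gt0 form0; apply: cabs2_eq0.
apply: (pure_decomp_avg_eq0 (g := fun k => cabs2 (c * k.2 x + d * k.2 y)) D) => //.
  by move=> ?; apply: cabs2_ge0.
by apply: complexI; rewrite (pure_decomp_qform2 x y c d D) form0.
Qed.

Lemma pure_decomp_avg_const rho s (g : R * (T -> R[i]) -> R) e :
  pure_decomp rho s -> (forall k, k \in s -> 0 < k.1 -> g k = e) ->
  \sum_(k <- s) k.1 * g k = e.
Proof.
move=> [p_ge0 [p_sum1 _]] g_e; transitivity (\sum_(k <- s) k.1 * e).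
  rewrite big_seq [RHS]big_seq; apply: eq_bigr => k ks.
  by have [<-|k_gt0] := eqVneq 0 k.1; rewrite ?mul0r // g_e // lt_def eq_sym k_gt0 p_ge0.
by rewrite -mulr_suml p_sum1 mul1r.
Qed.

(* Normalizing the nonzero vectors of rho = sum_f |f><f| gives a decomposition. *)
Lemma pure_decomp_of_sum rho (l : seq (T -> R[i])) :
  \sum_(f <- l) \sum_x cabs2 (f x) = 1 ->
  (forall x y, rho x y = \sum_(f <- l) f x * (f y)^*) ->
  exists s, pure_decomp rho s.
Proof.
move=> l_sum1 rhoE.
pose N (f : T -> R[i]) := \sum_x cabs2 (f x).
have N_ge0 f : 0 <= N f by apply: sumr_ge0 => x _; apply: cabs2_ge0.
have N_eq0 f : N f = 0 -> forall x, f x = 0.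
  by move=> f0 x; apply: cabs2_eq0; apply: (psumr_eq0P _ f0) => // y _; apply: cabs2_ge0.
pose sc f := ((Num.sqrt (N f))^-1)%:C.
have scK f : N f != 0 -> (N f)%:C * (sc f * (sc f)^*) = 1.
  by move=> f0; rewrite -cabs2_mulJ /sc cabs2_real -rmorphM exprVn sqr_sqrtr // mulfV.
exists [seq (N f, fun x => sc f * f x) | f <- [seq f <- l | N f != 0]].
split; [|split; [|split]].
- by move=> k /mapP [f _ ->]; apply: N_ge0.
- rewrite big_map big_filter -l_sum1 [RHS](bigID (fun f => N f != 0)) /=.
  by rewrite [X in _ = _ + X]big1 ?addr0 // => f; rewrite negbK => /eqP.
- move=> k /mapP [f]; rewrite mem_filter => /andP [f0 _] -> /=.
  apply/vnorm_eq1; under eq_bigr do rewrite cabs2M.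
  by rewrite -mulr_sumr /sc cabs2_real exprVn sqr_sqrtr // mulVf.
- move=> x y; rewrite rhoE big_map big_filter (bigID (fun f => N f != 0)) /=.
  rewrite [X in _ + X]big1 ?addr0; last first.
    by move=> f; rewrite negbK => /eqP f0; rewrite (N_eq0 f f0 x) mul0r.
  apply: eq_bigr => f f0 /=.
  rewrite -[LHS]mul1r -(scK f f0) /proj rmorphM; ring.
Qed.

Lemma psd_proj (phi : T -> R[i]) : psd (proj phi).
Proof.
move=> v; rewrite /proj.
have -> : \sum_x \sum_y (v x)^* * (phi x * (phi y)^*) * v y =
  (\sum_x (v x)^* * phi x) * (\sum_x (v x)^* * phi x)^*.
  rewrite mulr_suml; apply: eq_bigr => x _.
  rewrite rmorph_sum mulr_sumr; apply: eq_bigr => y _.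
  by rewrite rmorphM /= conjCK; ring.
by rewrite -cabs2_mulJ lecR cabs2_ge0.
Qed.

Lemma density_proj (phi : T -> R[i]) : vnorm phi = 1 -> density (proj phi).
Proof.
move=> /vnorm_eq1 phi1; split; first exact: psd_proj.
rewrite /proj -(rmorph1 (real_complex R)) -phi1 rmorph_sum; apply: eq_bigr => x _.
by rewrite -cabs2_mulJ.
Qed.

Lemma psd_qform2 (M : T -> T -> R[i]) x1 x2 (c d : R[i]) : psd M ->
  0 <= c^* * M x1 x1 * c + c^* * M x1 x2 * d + d^* * M x2 x1 * c + d^* * M x2 x2 * d.
Proof.
pose e (t : T) (a : R[i]) (x : T) : R[i] := if x == t then a else 0.
have sum_e (F : T -> R[i]) t a : \sum_y F y * e t a y = F t * a.
  rewrite (bigD1 t) //= big1 => [|y /negbTE y_t]; first by rewrite /e eqxx addr0.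
  by rewrite /e y_t mulr0.
have sum_eJ (F : T -> R[i]) t a : \sum_y (e t a y)^* * F y = a^* * F t.
  rewrite (bigD1 t) //= big1 => [|y /negbTE y_t]; first by rewrite /e eqxx addr0.
  by rewrite /e y_t rmorph0 mul0r.
move=> /(_ (fun x => e x1 c x + e x2 d x)).
under eq_bigr do under eq_bigr do rewrite mulrDr.
under eq_bigr do rewrite big_split /= !sum_e -!mulrA -mulrDr rmorphD mulrDl.
by rewrite big_split /= !sum_eJ; congr (0 <= _); ring.
Qed.

End PureDecomposition.

Section ConvexRoof.
Variables (R : realType) (I J : finType).
Implicit Types (rho : I * J -> I * J -> R[i]) (phi : I * J -> R[i]).

Lemma E2_const rho e : (exists s, pure_decomp rho s) ->
  (forall s, pure_decomp rho s -> forall k, k \in s -> 0 < k.1 -> E2pure k.2 = e) ->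
  E2 rho = e.
Proof.
move=> [s0 D0] E2e; rewrite /E2.
have -> : [set e0 : R | exists s, pure_decomp rho s /\
     e0 = \sum_(k <- s) k.1 * E2pure k.2] = [set e].
  apply/seteqP; split => y /=.
    by move=> [s [D ->]]; apply: (pure_decomp_avg_const D); apply: E2e.
  by move=> ->; exists s0; split => //; rewrite (pure_decomp_avg_const (e := e) D0) //; apply: E2e.
exact: inf1.
Qed.

Lemma E2_ge rho c : (exists s, pure_decomp rho s) ->
  (forall s, pure_decomp rho s -> c <= \sum_(k <- s) k.1 * E2pure k.2) ->
  c <= E2 rho.
Proof.
move=> [s0 D0] avg_ge; apply: lb_le_inf.
  by exists (\sum_(k <- s0) k.1 * E2pure k.2); exists s0.
by move=> y [s [D ->]]; apply: avg_ge.
Qed.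

Lemma E2pure_phase phi (lam : R[i]) : cabs2 lam = 1 ->
  E2pure (fun x => lam * phi x) = E2pure phi.
Proof.
move=> lam1; rewrite /E2pure; congr (1 - opnorm _).
apply/funext => i; apply/funext => i'; apply: eq_bigr => j _.
rewrite rmorphM; transitivity ((lam * lam^*) * (phi (i, j) * (phi (i', j))^*)); first by ring.
by rewrite -cabs2_mulJ lam1 mul1r.
Qed.

(* The quadratic form of |phi><phi| vanishes at phi(x0)|x> - phi(x)|x0>, which forces
   phi(x0) psi(x) = phi(x) psi(x0) for every positive-weight psi. *)
Lemma pure_decomp_proj_phase phi s k x0 :
  phi x0 != 0 -> vnorm phi = 1 -> pure_decomp (proj phi) s -> k \in s -> 0 < k.1 ->
  exists2 lam, cabs2 lam = 1 & k.2 = (fun x => lam * phi x).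
Proof.
move=> phi_x0 phi1 D ks k_gt0.
have cross x : phi x0 * k.2 x = phi x * k.2 x0.
  apply/eqP; rewrite -subr_eq0 -mulNr; apply/eqP.
  apply: (pure_decomp_qform2_eq0 D ks k_gt0); rewrite /proj rmorphN /=; ring.
set lam := k.2 x0 / phi x0.
have k2E : k.2 = (fun x => lam * phi x).
  by apply/funext => x; apply: (mulfI phi_x0); rewrite cross /lam; field.
exists lam => //; have [_ [_ [k_unit _]]] := D.
move/vnorm_eq1: (k_unit k ks); rewrite k2E; under eq_bigr do rewrite cabs2M.
by rewrite -mulr_sumr (proj1 (vnorm_eq1 phi) phi1) mulr1.
Qed.

Lemma E2_proj phi x0 : phi x0 != 0 -> vnorm phi = 1 -> E2 (proj phi) = E2pure phi.
Proof.
move=> phi_x0 phi1; apply: E2_const => [|s D k ks k_gt0].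
  exists [:: (1, phi)]; split; [|split; [|split]].
  - by move=> k; rewrite inE => /eqP ->.
  - by rewrite big_seq1.
  - by move=> k; rewrite inE => /eqP ->.
  - by move=> x y; rewrite big_seq1 /= mul1r.
have [lam lam1 ->] := pure_decomp_proj_phase phi_x0 phi1 D ks k_gt0.
exact: E2pure_phase.
Qed.

End ConvexRoof.

(* Since ||rho^A||^2 <= ||rho^A||_F^2 = 1 - 2 D <= (1 - D)^2, where D is the sum of
   the squared 2 x 2 minors of psi, every squared minor is at most E_2(psi). *)
Lemma E2pure_ge_minor32 (R : realType) (psi : 'I_3 * 'I_2 -> R[i]) : vnorm psi = 1 ->
  cabs2 (psi (inord 1, inord 0) * psi (inord 2, inord 1) -
         psi (inord 1, inord 1) * psi (inord 2, inord 0)) <= E2pure psi.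
Proof.
move=> /vnorm_eq1; rewrite sum_pair !big_ord_recl !big_ord0 !addr0.
have -> : (inord 1 : 'I_3) = lift ord0 ord0 by apply/val_inj; rewrite /= inordK.
have -> : (inord 2 : 'I_3) = lift ord0 (lift ord0 ord0) by apply/val_inj; rewrite /= inordK.
have -> : (inord 0 : 'I_2) = ord0 by apply/val_inj; rewrite /= inordK.
have -> : (inord 1 : 'I_2) = lift ord0 ord0 by apply/val_inj; rewrite /= inordK.
rewrite /E2pure.
set z20 := psi (lift _ (lift _ _), ord0); set z21 := psi (lift _ (lift _ _), lift _ _).
set z10 := psi (lift _ _, ord0); set z11 := psi (lift _ _, lift _ _).
set z00 := psi (ord0, ord0); set z01 := psi (ord0, _).
move=> psi1.
have {}psi1 : cabs2 z00 + cabs2 z01 + cabs2 z10 + cabs2 z11 + cabs2 z20 + cabs2 z21 = 1.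
  by rewrite -psi1; ring.
set m01 := cabs2 (z00 * z11 - z01 * z10); set m02 := cabs2 (z00 * z21 - z01 * z20).
set m12 := cabs2 (z10 * z21 - z11 * z20).
have /= gram := gram32_minors z00 z01 z10 z11 z20 z21.
rewrite -/m01 -/m02 -/m12 psi1 expr1n in gram.
have m01_ge0 : 0 <= m01 by apply: cabs2_ge0.
have m02_ge0 : 0 <= m02 by apply: cabs2_ge0.
suff : opnorm (redX psi) <= 1 - (m01 + m02 + m12) by lra.
apply: opnorm_le; first by exists (basisv ord0); apply: vnorm_basisv.
move=> v /vnorm_eq1; rewrite !big_ord_recl !big_ord0 !addr0 => v1.
have frob_ge0 : 0 <= 1 - 2 * (m01 + m02 + m12).
  move: gram; set F := (X in X + _ = _) => gram.
  have : 0 <= F by rewrite /F; repeat first [apply: cabs2_ge0 | apply: addr_ge0].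
  lra.
apply: vnorm_le; first lra.
rewrite /apply_op /redX !big_ord_recl !big_ord0 !addr0.
apply: le_trans; first by apply: lerD; [|apply: lerD]; apply: cabs2_dot3_le.
rewrite v1 !mulr1 -/z00 -/z01 -/z10 -/z11 -/z20 -/z21.
have -> : (1 - (m01 + m02 + m12)) ^+ 2 = 1 - 2 * (m01 + m02 + m12) + (m01 + m02 + m12) ^+ 2.
  by ring.
have := sqr_ge0 (m01 + m02 + m12); lra.
Qed.

Lemma mixed_form_ge_minor (R : realType) (z1 z2 w1 w2 : R[i]) (c d : R) :
  - (2 * `|c * d| * normc (z1 * z2 - w1 * w2)) <=
  c ^+ 2 * cabs2 z1 + d ^+ 2 * cabs2 z2 + 2 * (c * d) * complex.Re (w1 * w2^*).
Proof.
set u := `|c * d|; have u_ge0 : 0 <= u by apply: normr_ge0.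
have amgm : 2 * u * (normc z1 * normc z2) <= c ^+ 2 * cabs2 z1 + d ^+ 2 * cabs2 z2.
  rewrite -!normc_sqr /u normrM -[c ^+ 2]ger0_norm ?sqr_ge0 // -[d ^+ 2]ger0_norm ?sqr_ge0 //.
  rewrite !normrX; have := sqr_ge0 (`|c| * normc z1 - `|d| * normc z2).
  have -> : (`|c| * normc z1 - `|d| * normc z2) ^+ 2 = `|c| ^+ 2 * normc z1 ^+ 2 +
    `|d| ^+ 2 * normc z2 ^+ 2 - 2 * (`|c| * `|d|) * (normc z1 * normc z2) by ring.
  lra.
have cross : - (u * (normc w1 * normc w2)) <= c * d * complex.Re (w1 * w2^*).
  have := Re_ge_Nnormc (w1 * w2^*); have := Re_ge_Nnormc (- (w1 * w2^*)).
  rewrite normcN normcM normc_conj.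
  have -> : complex.Re (- (w1 * w2^*)) = - complex.Re (w1 * w2^*) by case: (w1 * w2^*).
  by rewrite /u; case: (lerP 0 (c * d)) => cd; [rewrite ger0_norm|rewrite ltr0_norm]; nra.
have tri : normc w1 * normc w2 <= normc z1 * normc z2 + normc (z1 * z2 - w1 * w2).
  have := le_normcD (z1 * z2) (- (z1 * z2 - w1 * w2)); rewrite normcN -!normcM.
  by have -> : z1 * z2 + - (z1 * z2 - w1 * w2) = w1 * w2 by ring.
have := ler_wpM2l u_ge0 tri; lra.
Qed.

(* Average [mixed_form_ge_minor] over a decomposition and apply Jensen to the minors. *)
Lemma E2_ge_witness (R : realType) (I J : finType) (rho : I * J -> I * J -> R[i])
    (x1 x2 y1 y2 : I * J) (c d F : R) :
  (exists s, pure_decomp rho s) ->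
  (forall psi : I * J -> R[i], vnorm psi = 1 ->
     cabs2 (psi x1 * psi x2 - psi y1 * psi y2) <= E2pure psi) ->
  F%:C = (c ^+ 2)%:C * rho x1 x1 + (d ^+ 2)%:C * rho x2 x2 +
         (c * d)%:C * (rho y1 y2 + rho y2 y1) ->
  F < 0 -> 0 < `|c * d| ->
  F ^+ 2 / (4 * `|c * d| ^+ 2) <= E2 rho.
Proof.
move=> D_ex minor_le FE F_lt0 u_gt0; apply: E2_ge => // s D.
have [p_ge0 [p_sum1 [p_unit _]]] := D.
set u := `|c * d|.
pose t (k : R * (I * J -> R[i])) := c ^+ 2 * cabs2 (k.2 x1) + d ^+ 2 * cabs2 (k.2 x2) +
  2 * (c * d) * complex.Re (k.2 y1 * (k.2 y2)^*).
pose n (k : R * (I * J -> R[i])) := normc (k.2 x1 * k.2 x2 - k.2 y1 * k.2 y2).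
have avg_t : \sum_(k <- s) k.1 * t k = F.
  by apply: (@complexI R); rewrite (pure_decomp_mixed x1 x2 y1 y2 c d D) FE.
pose mu := \sum_(k <- s) k.1 * n k.
have NF_le : - F <= 2 * u * mu.
  rewrite -avg_t /mu mulr_sumr -sumrN big_seq [X in _ <= X]big_seq.
  apply: ler_sum => k ks; have := ler_wpM2l (p_ge0 k ks)
    (mixed_form_ge_minor (k.2 x1) (k.2 x2) (k.2 y1) (k.2 y2) c d).
  by rewrite /t /n -/u; lra.
have mu2_le : mu ^+ 2 <= \sum_(k <- s) k.1 * E2pure k.2.
  apply: le_trans (jensen_sqr n p_ge0 p_sum1) _.
  rewrite big_seq [X in _ <= X]big_seq; apply: ler_sum => k ks.
  by rewrite ler_wpM2l ?p_ge0 // /n normc_sqr minor_le ?p_unit.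
have F2_le : F ^+ 2 <= (2 * u * mu) ^+ 2.
  by rewrite -sqrrN ler_sqr ?nnegrE; lra.
rewrite ler_pdivrMr ?mulr_gt0 ?exprn_gt0 // mulrC; apply: le_trans F2_le _.
have -> : (2 * u * mu) ^+ 2 = 4 * u ^+ 2 * mu ^+ 2 by ring.
by rewrite ler_wpM2l // mulr_ge0 ?sqr_ge0.
Qed.

Section ExampleState.
Variable R : realType.
Variables a0 a1 a2 b0 b1 b2 : R.
Local Notation Phi := (Phi a0 a1 a2 b0 b1 b2).

(* The amplitudes of psi_0, psi_1 and of sqrt 2 * Phi, indexed by nat so that the
   partial traces unfold to explicit polynomials in the a_i, b_i. *)
Definition coefn (x0 x1 x2 : R) (i : nat) : R :=
  match i with 0 => x0 | 1 => x1 | _ => x2 end.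
Definition psi0n (i j : nat) : R := if i == j then coefn a0 a1 a2 i else 0.
Definition psi1n (i j : nat) : R := if j == (3 - i)%N then coefn b0 b1 b2 i else 0.
Definition Phin (i j k : nat) : R := if k == 0%N then psi0n i j else psi1n i j.

Lemma PhiE x : Phi x = ((Num.sqrt 2)^-1 * Phin (val x.1) (val x.2.1) (val x.2.2))%:C.
Proof.
case: x => i [j k]; rewrite /Defs.Phi /psi0 /psi1 /Phin /psi0n /psi1n /= rmorphM.
by case: ifP => _; case: ifP => _; rewrite ?mulr0.
Qed.

Lemma sqr_invsqrt2 : (Num.sqrt (2 : R))^-1 ^+ 2 = 1 / 2.
Proof. by rewrite exprVn sqr_sqrtr ?ler0n // div1r. Qed.

Definition rhoABn (i j i' j' : nat) : R :=
  1 / 2 * (Phin i j 0 * Phin i' j' 0 + Phin i j 1 * Phin i' j' 1).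

Lemma trC_PhiE x y : trC (proj Phi) x y = (rhoABn (val x.1) (val x.2) (val y.1) (val y.2))%:C.
Proof.
rewrite /trC /proj !big_ord_recl big_ord0 !PhiE /= !conj_realC -!rmorphM -!rmorphD.
by rewrite /rhoABn -sqr_invsqrt2; congr (_%:C); ring.
Qed.

Definition rhoACn (i k i' k' : nat) : R :=
  1 / 2 * (Phin i 0 k * Phin i' 0 k' + Phin i 1 k * Phin i' 1 k' +
           Phin i 2 k * Phin i' 2 k' + Phin i 3 k * Phin i' 3 k').
Arguments rhoACn : simpl never.

Lemma trB_PhiE x y : trB (proj Phi) x y = (rhoACn (val x.1) (val x.2) (val y.1) (val y.2))%:C.
Proof.
rewrite /trB /proj !big_ord_recl big_ord0 !PhiE /= !conj_realC -!rmorphM -!rmorphD.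
by rewrite /rhoACn -sqr_invsqrt2; congr (_%:C); ring.
Qed.

Lemma redX_PhiE x y : redX Phi x y =
  (1 / 2 * (\sum_(j < 4) psi0n (val x) j * psi0n (val y) j +
            \sum_(j < 4) psi1n (val x) j * psi1n (val y) j))%:C.
Proof.
rewrite /redX sum_pair !big_ord_recl !big_ord0 !PhiE /= !conj_realC -!rmorphM -!rmorphD.
by rewrite -sqr_invsqrt2 /Phin /=; congr (_%:C); ring.
Qed.

Lemma vnorm_Phi : a0 ^+ 2 + a1 ^+ 2 + a2 ^+ 2 = 1 -> b0 ^+ 2 + b1 ^+ 2 + b2 ^+ 2 = 1 ->
  vnorm Phi = 1.
Proof.
move=> a_unit b_unit; apply/vnorm_eq1; rewrite sum_pair.
under eq_bigr do rewrite sum_pair.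
rewrite !big_ord_recl !big_ord0 !PhiE !cabs2_real /= /Phin /psi0n /psi1n /=.
by rewrite !exprMn sqr_invsqrt2; lra.
Qed.

Hypotheses (a0_ge0 : 0 <= a0) (a1_ge0 : 0 <= a1) (a2_ge0 : 0 <= a2)
  (b0_ge0 : 0 <= b0) (b1_ge0 : 0 <= b1) (b2_ge0 : 0 <= b2)
  (a0b0 : a0 ^+ 2 = b0 ^+ 2) (a0_ge : 1 / 2 <= a0 ^+ 2)
  (a1a0 : a1 < a0) (a2a1 : a2 <= a1) (b1b0 : b1 < b0) (b2b1 : b2 <= b1)
  (a_unit : a0 ^+ 2 + a1 ^+ 2 + a2 ^+ 2 = 1) (b_unit : b0 ^+ 2 + b1 ^+ 2 + b2 ^+ 2 = 1).

Lemma b0E : b0 = a0.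
Proof. by apply/eqP; rewrite -(eqrXn2 (n := 2)) // a0b0. Qed.

Lemma a0_gt0 : 0 < a0. Proof. exact: le_lt_trans a1a0. Qed.
Lemma b0_gt0 : 0 < b0. Proof. exact: le_lt_trans b1b0. Qed.

(* rho^A = diag((a_i^2 + b_i^2) / 2). *)
Lemma E2pure_Phi : E2pure Phi = 1 - a0 ^+ 2.
Proof.
rewrite /E2pure; congr (1 - _).
pose d (x : 'I_3) := 1 / 2 * (coefn a0 a1 a2 (val x) ^+ 2 + coefn b0 b1 b2 (val x) ^+ 2).
have -> : a0 ^+ 2 = d ord0 by rewrite /d /= -a0b0; lra.
apply: opnorm_diag => [x y|].
  rewrite redX_PhiE !big_ord_recl !big_ord0 /d.
  by case: x => [[|[|[|?]]] ?] //; case: y => [[|[|[|?]]] ?] //=;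
    rewrite /psi0n /psi1n /=; congr (_%:C); ring.
have e1 : a1 ^+ 2 <= a0 ^+ 2 by rewrite ler_sqr // ltW.
have e2 : a2 ^+ 2 <= a1 ^+ 2 by rewrite ler_sqr.
have e3 : b1 ^+ 2 <= b0 ^+ 2 by rewrite ler_sqr // ltW.
have e4 : b2 ^+ 2 <= b1 ^+ 2 by rewrite ler_sqr.
have := sqr_ge0 a1; have := sqr_ge0 a2; have := sqr_ge0 b1; have := sqr_ge0 b2.
move=> ? ? ? ? [[|[|[|?]]] ?] //; rewrite /d /= ?lexx ?andbT; try (apply/andP; split); lra.
Qed.

Lemma E2_proj_Phi : E2 (proj Phi) = 1 - a0 ^+ 2.
Proof.
rewrite (E2_proj (x0 := (ord0, (ord0, ord0)))) ?E2pure_Phi ?vnorm_Phi //.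
rewrite PhiE (inj_eq (@complexI R)) mulf_neq0 ?invr_eq0 ?sqrtr_eq0 -?ltNge ?ltr0n //.
by rewrite /Phin /psi0n /= gt_eqF // a0_gt0.
Qed.

Lemma pure_decomp_trC_Phi : exists s, pure_decomp (trC (proj Phi)) s.
Proof.
apply: (pure_decomp_of_sum (l := [:: (fun x : 'I_3 * 'I_4 => Phi (x.1, (x.2, ord0)));
                                   (fun x => Phi (x.1, (x.2, lift ord0 ord0)))])).
- rewrite big_cons big_seq1 !sum_pair !big_ord_recl !big_ord0.
  rewrite !PhiE !cabs2_real /= /Phin /psi0n /psi1n /= !exprMn sqr_invsqrt2.
  by rewrite !expr0n /= !mulr0 !addr0 !add0r; have := a_unit; have := b_unit; lra.
- by move=> x y; rewrite /trC /proj big_cons big_seq1 !big_ord_recl big_ord0 addr0.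
Qed.

Definition span01 (al be : R[i]) (i j : nat) : R[i] :=
  al * (psi0n i j)%:C + be * (psi1n i j)%:C.

Definition span01_gram (al be : R[i]) (i i' : nat) : R[i] :=
  \sum_(j < 4) span01 al be i j * (span01 al be i' j)^*.

(* The block of rho^A on |1>, |2>, for a unit vector al psi_0 + be psi_1: its squared
   Frobenius norm is (p + q)^2 - (nonnegative terms) with p + q = 1 - a0^2 <= a0^2. *)
Lemma span01_gram_frob_le (al be : R[i]) : cabs2 al + cabs2 be = 1 ->
  cabs2 (span01_gram al be 1 1) + cabs2 (span01_gram al be 1 2) +
  cabs2 (span01_gram al be 2 1) + cabs2 (span01_gram al be 2 2) <= (a0 ^+ 2) ^+ 2.
Proof.
case: al => x1 y1; case: be => x2 y2.
rewrite /span01_gram !big_ord_recl big_ord0 /span01 /psi0n /psi1n /bump /cabs2 /= => ab1.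
pose A := x1 ^+ 2 + y1 ^+ 2; pose B := x2 ^+ 2 + y2 ^+ 2.
pose p := A * a1 ^+ 2 + B * b1 ^+ 2; pose q := A * a2 ^+ 2 + B * b2 ^+ 2.
pose v := x1 * y2 - y1 * x2.
match goal with |- is_true (?L <= _) =>
  have -> : L = (p + q) ^+ 2 - 2 * (A * a1 * a2 - B * b1 * b2) ^+ 2
                 - 8 * (a1 * a2 * b1 * b2) * v ^+ 2 by rewrite /p /q /A /B /v; ring end.
have pq : p + q = 1 - a0 ^+ 2.
  have -> : p + q = A * (a1 ^+ 2 + a2 ^+ 2) + B * (b1 ^+ 2 + b2 ^+ 2) by rewrite /p /q; ring.
  have -> : a1 ^+ 2 + a2 ^+ 2 = 1 - a0 ^+ 2 by have := a_unit; lra.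
  have -> : b1 ^+ 2 + b2 ^+ 2 = 1 - a0 ^+ 2 by rewrite -b0E; have := b_unit; lra.
  by rewrite -mulrDl ab1 mul1r.
rewrite pq.
have a1a2b1b2_ge0 : 0 <= a1 * a2 * b1 * b2 by rewrite !mulr_ge0.
have a0_sq : (1 - a0 ^+ 2) ^+ 2 <= (a0 ^+ 2) ^+ 2.
  by rewrite ler_sqr ?nnegrE; have := a_unit; have := a0_ge; have := sqr_ge0 a1;
    have := sqr_ge0 a2; lra.
have := sqr_ge0 (A * a1 * a2 - B * b1 * b2); have := sqr_ge0 v.
nra.
Qed.

Lemma E2pure_span01 (psi : 'I_3 * 'I_4 -> R[i]) (al be : R[i]) :
  (forall x, psi x = span01 al be (val x.1) (val x.2)) ->
  cabs2 al + cabs2 be = 1 -> E2pure psi = 1 - a0 ^+ 2.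
Proof.
move=> psiE ab1; rewrite /E2pure; congr (1 - _).
apply: (opnorm_block3 (blk := span01_gram al be)); rewrite ?sqr_ge0 ?span01_gram_frob_le //.
- by move=> x y; apply: eq_bigr => j _; rewrite !psiE.
all: clear psiE; move: ab1; case: al => x1 y1; case: be => x2 y2.
all: rewrite /span01_gram !big_ord_recl big_ord0 /span01 /psi0n /psi1n /bump /cabs2 /=.
all: move=> ab1; complex_eq; try ring.
by rewrite b0E -[RHS]mulr1 -ab1; ring.
Qed.

(* Vectors of a decomposition of rho^AB vanish wherever rho^AB has a zero diagonal entry
   and satisfy the linear relations forced by its rank-one 2 x 2 blocks, hence lie in
   span(psi_0, psi_1). *)
Lemma trC_Phi_support s k : pure_decomp (trC (proj Phi)) s -> k \in s -> 0 < k.1 ->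
  exists al be, forall x, k.2 x = span01 al be (val x.1) (val x.2).
Proof.
move=> D ks k_gt0.
pose g i j := k.2 (inord i, inord j).
have gE (x : 'I_3 * 'I_4) : k.2 x = g (val x.1) (val x.2).
  by case: x => i j; rewrite /g !inord_val.
have zero i j : (i < 3)%N -> (j < 4)%N -> rhoABn i j i j = 0 -> g i j = 0.
  move=> hi hj rho0; apply: (pure_decomp_diag_eq0 D ks k_gt0).
  by rewrite trC_PhiE /= !inordK // rho0.
have pair i j i' j' (c d : R) : (i < 3)%N -> (j < 4)%N -> (i' < 3)%N -> (j' < 4)%N ->
    c ^+ 2 * rhoABn i j i j + c * d * (rhoABn i j i' j' + rhoABn i' j' i j) +
    d ^+ 2 * rhoABn i' j' i' j' = 0 ->
    c%:C * g i j + d%:C * g i' j' = 0.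
  move=> hi hj hi' hj' form0; apply: (pure_decomp_qform2_eq0 D ks k_gt0).
  rewrite !trC_PhiE /= !inordK // !conj_realC -!rmorphM -!rmorphD.
  by rewrite -[RHS](rmorph0 (real_complex R)) -form0; congr (_%:C); ring.
have solve (c d : R) y z : d%:C != 0 -> c%:C * y + (- d)%:C * z = 0 -> z = y / d%:C * c%:C.
  move=> d0 /eqP; rewrite rmorphN mulNr subr_eq0 => /eqP yz.
  by apply: (mulfI d0); rewrite -yz; field.
have a0C : a0%:C != 0 :> R[i] by rewrite (inj_eq (@complexI R)) gt_eqF // a0_gt0.
have b0C : b0%:C != 0 :> R[i] by rewrite (inj_eq (@complexI R)) gt_eqF // b0_gt0.
exists (g 0 0 / a0%:C), (g 0 3 / b0%:C) => x; rewrite gE.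
case: x => [[i hi] [j hj]] /=.
case: i hi => [|[|[|i]]] // _; case: j hj => [|[|[|[|j]]]] // _;
  rewrite /span01 /psi0n /psi1n /= ?rmorph0 ?mulr0 ?addr0 ?add0r;
  first [ by rewrite divfK
        | by apply: zero => //; rewrite /rhoABn /Phin /psi0n /psi1n /=; ring
        | by apply: solve => //; apply: pair => //; rewrite /rhoABn /Phin /psi0n /psi1n /=; ring ].
Qed.

Lemma E2_trC_Phi : E2 (trC (proj Phi)) = 1 - a0 ^+ 2.
Proof.
apply: E2_const => [|s D k ks k_gt0]; first exact: pure_decomp_trC_Phi.
have [al [be k2E]] := trC_Phi_support D ks k_gt0.
apply: (E2pure_span01 k2E).
have [_ [_ [k_unit _]]] := D.
move/vnorm_eq1: (k_unit k ks).
rewrite sum_pair !big_ord_recl !big_ord0 !k2E /span01 /psi0n /psi1n /bump /=.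
clear k2E; case: al => x1 y1; case: be => x2 y2; rewrite /cabs2 /=.
have := a_unit; have := b_unit.
nra.
Qed.

Lemma pure_decomp_trB_Phi : exists s, pure_decomp (trB (proj Phi)) s.
Proof.
apply: (pure_decomp_of_sum (l := [seq (fun x : 'I_3 * 'I_2 => Phi (x.1, (j, x.2))) | j : 'I_4])).
- rewrite big_map /= big_enum !big_ord_recl big_ord0 !sum_pair !big_ord_recl !big_ord0.
  rewrite !PhiE !cabs2_real /= /Phin /psi0n /psi1n /= !exprMn sqr_invsqrt2.
  by rewrite !expr0n /= !mulr0 !addr0 !add0r; have := a_unit; have := b_unit; lra.
- by move=> x y; rewrite /trB /proj big_map big_enum.
Qed.

(* <v, rho_AC^Gamma v> for v = c|i,0> + d|i',1>. *)
Definition ptform (i i' : nat) (c d : R) : R :=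
  c ^+ 2 * rhoACn i 0 i 0 + d ^+ 2 * rhoACn i' 1 i' 1 +
  c * d * (rhoACn i 1 i' 0 + rhoACn i' 0 i 1).

Lemma not_psd_ptrans_trB_Phi i i' c d : (i < 3)%N -> (i' < 3)%N -> ptform i i' c d < 0 ->
  ~ psd (ptrans2 (trB (proj Phi))).
Proof.
move=> hi hi' F_lt0 /(psd_qform2 (inord i, inord 0) (inord i', inord 1) c%:C d%:C).
rewrite /ptrans2 !trB_PhiE /= !inordK // lecE /= => /andP [_].
by rewrite /ptform in F_lt0; nra.
Qed.

Lemma E2_trB_Phi_ge_ptform i i' c d : (i, i') = (1, 2)%N \/ (i, i') = (2, 1)%N ->
  ptform i i' c d < 0 -> 0 < `|c * d| ->
  ptform i i' c d ^+ 2 / (4 * `|c * d| ^+ 2) <= E2 (trB (proj Phi)).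
Proof.
move=> ii' F_lt0 cd_gt0.
have [hi hi'] : (i < 3)%N /\ (i' < 3)%N by case: ii' => -[-> ->].
apply: (E2_ge_witness (x1 := (inord i, inord 0)) (x2 := (inord i', inord 1))
  (y1 := (inord i, inord 1)) (y2 := (inord i', inord 0)) pure_decomp_trB_Phi) => //.
  move=> psi /E2pure_ge_minor32; case: ii' => -[-> ->] //.
  by rewrite -cabs2N; congr (cabs2 _ <= _); ring.
by rewrite !trB_PhiE /= !inordK // /ptform; complex_eq; ring.
Qed.

Lemma ptform_neg : b1 * a2 != a1 * b2 -> exists i i' c d,
  [/\ (i, i') = (1, 2)%N \/ (i, i') = (2, 1)%N, 0 < `|c * d| & ptform i i' c d < 0].
Proof.
have b1a2_ge0 : 0 <= b1 * a2 by apply: mulr_ge0.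
have a1b2_ge0 : 0 <= a1 * b2 by apply: mulr_ge0.
move=> hne; case: (ltrgtP (b1 * a2) (a1 * b2)) => h; last by rewrite h eqxx in hne.
- have b1_gt0 : 0 < b1.
    rewrite lt_def b1_ge0 andbT; apply/eqP => b1_0; move: h; rewrite b1_0 mul0r.
    have -> : b2 = 0 by apply/eqP; rewrite eq_le b2_ge0 andbT -b1_0.
    by rewrite mulr0 ltxx.
  exists 2%N, 1%N, (b1 ^+ 2), (- (a1 * b2)); split; first by right.
    by rewrite normr_gt0 mulf_neq0 ?oppr_eq0 ?expf_neq0 ?gt_eqF // (le_lt_trans b1a2_ge0 h).
  have -> : ptform 2 1 (b1 ^+ 2) (- (a1 * b2)) =
            b1 ^+ 2 / 2 * ((b1 * a2) ^+ 2 - (a1 * b2) ^+ 2).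
    by rewrite /ptform /rhoACn /Phin /psi0n /psi1n /=; ring.
  by rewrite pmulr_rlt0 ?divr_gt0 ?exprn_gt0 // subr_lt0 ltr_sqr.
- have a1_gt0 : 0 < a1.
    rewrite lt_def a1_ge0 andbT; apply/eqP => a1_0; move: h; rewrite a1_0 mul0r.
    have -> : a2 = 0 by apply/eqP; rewrite eq_le a2_ge0 andbT -a1_0.
    by rewrite mulr0 ltxx.
  exists 1%N, 2%N, (a2 * b1), (- (a1 ^+ 2)); split; first by left.
    by rewrite normr_gt0 mulf_neq0 ?oppr_eq0 ?expf_neq0 ?gt_eqF // mulrC (le_lt_trans a1b2_ge0 h).
  have -> : ptform 1 2 (a2 * b1) (- (a1 ^+ 2)) =
            a1 ^+ 2 / 2 * ((a1 * b2) ^+ 2 - (b1 * a2) ^+ 2).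
    by rewrite /ptform /rhoACn /Phin /psi0n /psi1n /=; ring.
  by rewrite pmulr_rlt0 ?divr_gt0 ?exprn_gt0 // subr_lt0 ltr_sqr.
Qed.

Lemma trB_Phi_entangled : b1 * a2 != a1 * b2 ->
  0 < E2 (trB (proj Phi)) /\ ~ psd (ptrans2 (trB (proj Phi))).
Proof.
move=> /ptform_neg [i [i' [c [d [ii' cd_gt0 F_lt0]]]]].
split; last by case: ii' F_lt0 => -[-> ->]; apply: not_psd_ptrans_trB_Phi.
apply: lt_le_trans (E2_trB_Phi_ge_ptform ii' F_lt0 cd_gt0).
apply: divr_gt0; first by rewrite expr2 nmulr_rgt0.
by rewrite mulr_gt0 // exprn_gt0.
Qed.

End ExampleState.

Lemma E2_not_monogamous (R : realType) : ~ monogamous (@E2m R).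
Proof.
pose a0 : R := 4 / 5; pose a1 : R := 3 / 5; pose a2 : R := 0.
pose b0 : R := 4 / 5; pose b1 : R := 12 / 25; pose b2 : R := 9 / 25.
have a0_ge0 : 0 <= a0 by rewrite /a0; lra.
have a1_ge0 : 0 <= a1 by rewrite /a1; lra.
have a2_ge0 : 0 <= a2 by [].
have b0_ge0 : 0 <= b0 by rewrite /b0; lra.
have b1_ge0 : 0 <= b1 by rewrite /b1; lra.
have b2_ge0 : 0 <= b2 by rewrite /b2; lra.
have a0b0 : a0 ^+ 2 = b0 ^+ 2 by [].
have a0_ge : 1 / 2 <= a0 ^+ 2 by rewrite /a0 expr2; lra.
have a1a0 : a1 < a0 by rewrite /a1 /a0; lra.
have a2a1 : a2 <= a1 by [].
have b1b0 : b1 < b0 by rewrite /b1 /b0; lra.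
have b2b1 : b2 <= b1 by rewrite /b1 /b2; lra.
have a_unit : a0 ^+ 2 + a1 ^+ 2 + a2 ^+ 2 = 1 by rewrite /a0 /a1 /a2 !expr2; lra.
have b_unit : b0 ^+ 2 + b1 ^+ 2 + b2 ^+ 2 = 1 by rewrite /b0 /b1 /b2 !expr2; lra.
have ab_generic : b1 * a2 != a1 * b2 by rewrite /a2 /b1 /a1 /b2 mulr0; apply/eqP; lra.
pose rho := proj (Phi a0 a1 a2 b0 b1 b2).
have E2ABC : E2 rho = 1 - a0 ^+ 2 by apply: E2_proj_Phi.
have E2AB : E2 (trC rho) = 1 - a0 ^+ 2 by apply: E2_trC_Phi.
have [E2AC_gt0 _] : 0 < E2 (trB rho) /\ ~ psd (ptrans2 (trB rho)).
  by apply: trB_Phi_entangled.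
move=> /(_ _ _ _ rho (density_proj (vnorm_Phi a_unit b_unit))).
rewrite /E2m E2ABC E2AB => /(_ erefl) E2AC0.
by rewrite E2AC0 ltxx in E2AC_gt0.
Qed.

Theorem theorem1 (R : realType) :
  ~ monogamous (@E2m R) /\
  (forall a0 a1 a2 b0 b1 b2 : R,
    0 <= a0 -> 0 <= a1 -> 0 <= a2 -> 0 <= b0 -> 0 <= b1 -> 0 <= b2 ->
    a0 ^+ 2 = b0 ^+ 2 -> 1 / 2 <= a0 ^+ 2 ->
    a1 < a0 -> a2 <= a1 -> b1 < b0 -> b2 <= b1 ->
    a0 ^+ 2 + a1 ^+ 2 + a2 ^+ 2 = 1 -> b0 ^+ 2 + b1 ^+ 2 + b2 ^+ 2 = 1 ->
    b1 * a2 != a1 * b2 ->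
    let Phi := Phi a0 a1 a2 b0 b1 b2 in
    let rhoABC := proj Phi in
    E2pure Phi = 1 - a0 ^+ 2 /\
    E2 (trC rhoABC) = 1 - a0 ^+ 2 /\
    0 < E2 (trB rhoABC) /\
    ~ psd (ptrans2 (trB rhoABC))).
Proof.
split; first exact: E2_not_monogamous.
move=> a0 a1 a2 b0 b1 b2 a0_ge0 a1_ge0 a2_ge0 b0_ge0 b1_ge0 b2_ge0 a0b0 a0_ge a1a0 a2a1
  b1b0 b2b1 a_unit b_unit ab_generic Phi rhoABC.
split; first by apply: E2pure_Phi.
split; first by apply: E2_trC_Phi.
exact: trB_Phi_entangled.
Qed.
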